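(* Let $A$ be an $n\times n$ (real or complex) matrix and let $\sigma_1,\ldots,\sigma_{ns}$ be scalars such that each shifted matrix $A-\sigma_i I$ is nonsingular. Suppose that for each $i=1,\ldots,ns$ we have a current approximate solution $\tilde x_{0,i}$ to a shifted system, so that the remaining problem is $(A-\sigma_i I)(x_i-\tilde x_{0,i}) = r_{0,i}$, where the residuals satisfy $r_{0,i}=\beta_i r_{0,1}$ for scalars $\beta_i$, $i=2,\ldots,ns$ (and $\beta_1=1$). Let $z_1,\ldots,z_k$ be eigenvectors of $A$ and let $Z_k$ be the $n\times k$ matrix with columns $z_1,\ldots,z_k$. For each $i$, perform the minimum residual (minres) projection of the $i$-th system over $\mathrm{Span}\{z_1,\ldots,z_k\}$: choose $d_i$ minimizing $\|r_{0,i}-(A-\sigma_i I)Z_k d_i\|_2$, and set the new approximate solution $\tilde x_{0,i}+Z_k d_i$ with new residual $r_i = r_{0,i}-(A-\sigma_i I)Z_k d_i$. Then the new residual vectors $r_1,\ldots,r_{ns}$ are all scalar multiples of one another (they are parallel).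
   Context: This concerns solving multiply shifted linear systems $(A-\sigma_i I)x_i=b$ with a common right-hand side; $\|\cdot\|_2$ is the Euclidean norm. The minres projection over a subspace spanned by the columns of a matrix $W$ for the system $(A-\sigma I)(x-\tilde x_0)=r_0$ replaces $\tilde x_0$ by $\tilde x_0+Wd$ where $d$ minimizes $\|r_0-(A-\sigma I)Wd\|_2$. *)

From HB Require Import structures.
From mathcomp Require Import all_boot all_order all_algebra.
Set Implicit Arguments. Unset Strict Implicit. Unset Printing Implicit Defensive.
Import Order.TTheory GRing.Theory Num.Theory.
Local Open Scope ring_scope.

(* Scalars: C : numClosedFieldType (e.g. algC, complex R); covers real and
   complex matrices.  Vectors are column vectors 'cV[C]_n. *)

Definition enorm (C : numClosedFieldType) (n : nat) (v : 'cV[C]_n) : C :=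
  sqrtC (\sum_(i < n) `|v i 0| ^+ 2).

Definition eigenvector (C : numClosedFieldType) (n : nat) (A : 'M[C]_n) (z : 'cV[C]_n) : Prop :=
  z != 0 /\ exists lambda : C, A *m z = lambda *: z.

Definition minres_resid (C : numClosedFieldType) (n k : nat) (A : 'M[C]_n) (sigma : C)
  (W : 'M[C]_(n, k)) (r0 : 'cV[C]_n) (d : 'cV[C]_k) : 'cV[C]_n :=
  r0 - (A - sigma%:M) *m W *m d.

Definition minres_minimizer (C : numClosedFieldType) (n k : nat) (A : 'M[C]_n) (sigma : C)
  (W : 'M[C]_(n, k)) (r0 : 'cV[C]_n) (d : 'cV[C]_k) : Prop :=
  forall d' : 'cV[C]_k,
    enorm (minres_resid A sigma W r0 d) <= enorm (minres_resid A sigma W r0 d').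

(* The minres residual r_i is orthogonal to the range of (A - sigma_i I) Z.
   Since the columns of Z are eigenvectors whose eigenvalues differ from every
   sigma_i, (A - sigma_i I) Z = Z D_i with D_i diagonal and invertible, so this
   range is the column space of Z.  Moreover r_i - beta_i r_1 lies in the
   column space of Z because r_{0,i} = beta_i r_{0,1}.  A vector of the column
   space of Z that is orthogonal to it vanishes, hence r_i = beta_i r_1. *)

From HB Require Import structures.
From mathcomp Require Import all_boot all_order all_algebra.
From mathcomp Require Import ring.
Import Order.TTheory GRing.Theory Num.Theory.
Local Open Scope ring_scope.

Section Hermitian.

Context {C : numClosedFieldType} {n : nat}.
Implicit Types (v w x y : 'cV[C]_n) (t : C).

Definition dotc w v := \sum_(i < n) (w i 0)^* * v i 0.

Definition sqnorm v := \sum_(i < n) `|v i 0| ^+ 2.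

Lemma sqnorm_ge0 v : 0 <= sqnorm v.
Proof. by apply: sumr_ge0 => i _; rewrite exprn_ge0. Qed.

Lemma sqnorm_eq0 v : sqnorm v = 0 -> v = 0.
Proof.
move=> /eqP; rewrite psumr_eq0 => [/allP v0|i _]; last exact: exprn_ge0.
apply/matrixP => i j; rewrite (ord1 j) mxE.
by have /= := v0 i (mem_index_enum i); rewrite expf_eq0 normr_eq0 => /eqP.
Qed.

Lemma dotcc v : dotc v v = sqnorm v.
Proof. by apply: eq_bigr => i _; rewrite normCK mulrC. Qed.

Lemma dotcBZ w x y t : dotc w (x - t *: y) = dotc w x - t * dotc w y.
Proof.
rewrite /dotc mulr_sumr -sumrN -big_split /=.
by apply: eq_bigr => i _; rewrite !mxE; ring.
Qed.

Lemma sqnormBZ v w t :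
  sqnorm (v - t *: w) =
  sqnorm v - t^* * dotc w v - t * (dotc w v)^* + t * t^* * sqnorm w.
Proof.
rewrite /sqnorm /dotc rmorph_sum /= !mulr_sumr -!sumrN -!big_split /=.
apply: eq_bigr => i _; rewrite !mxE !normCK rmorphB !rmorphM /= conjCK.
ring.
Qed.

Lemma enorm_le x y : (enorm x <= enorm y) = (sqnorm x <= sqnorm y).
Proof. by rewrite ler_sqrtC // nnegrE sqnorm_ge0. Qed.

(* Taking t = <w, v> / |w|^2 shows |<w, v>|^2 / |w|^2 <= 0. *)
Lemma dotc_eq0_of_minimal v w :
  (forall t, sqnorm v <= sqnorm (v - t *: w)) -> dotc w v = 0.
Proof.
move=> vmin; have [/sqnorm_eq0 -> | w0] := eqVneq (sqnorm w) 0.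
  by rewrite /dotc big1 // => i _; rewrite mxE rmorph0 mul0r.
set a := dotc w v.
have conj_w : (sqnorm w)^-1^* = (sqnorm w)^-1.
  by rewrite geC0_conj // invr_ge0 sqnorm_ge0.
have := vmin (a / sqnorm w); rewrite sqnormBZ rmorphM /= conj_w -/a.
have -> : sqnorm v - a^* / sqnorm w * a - a / sqnorm w * a^*
          + a / sqnorm w * (a^* / sqnorm w) * sqnorm w
          = sqnorm v - a * a^* / sqnorm w by field.
rewrite -subr_ge0 addrAC subrr add0r oppr_ge0 -normCK => le0.
have ge0 : 0 <= `|a| ^+ 2 / sqnorm w by rewrite divr_ge0 ?exprn_ge0 ?sqnorm_ge0.
have /eqP : `|a| ^+ 2 / sqnorm w = 0 by apply/eqP; rewrite eq_le le0 ge0.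
by rewrite mulf_eq0 invr_eq0 (negbTE w0) orbF expf_eq0 normr_eq0 => /eqP.
Qed.

Lemma eq_of_orthogonal_colspan {k : nat} {Z : 'M[C]_(n, k)} {x y t} {u : 'cV[C]_k} :
  (forall u' : 'cV_k, dotc (Z *m u') x = 0) ->
  (forall u' : 'cV_k, dotc (Z *m u') y = 0) ->
  x - t *: y = Z *m u -> x = t *: y.
Proof.
move=> x_orth y_orth xy.
have : sqnorm (x - t *: y) = 0.
  by rewrite -dotcc {1}xy dotcBZ x_orth y_orth mulr0 subrr.
by move/sqnorm_eq0/eqP; rewrite subr_eq0 => /eqP.
Qed.

End Hermitian.

Section Minres.

Context {C : numClosedFieldType} {n k : nat} {A : 'M[C]_n}.

Lemma minres_resid_orthogonal sigma (W : 'M[C]_(n, k)) r0 d (y : 'cV[C]_k) :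
  minres_minimizer A sigma W r0 d ->
  dotc ((A - sigma%:M) *m W *m y) (minres_resid A sigma W r0 d) = 0.
Proof.
move=> dmin; apply: dotc_eq0_of_minimal => t.
have := dmin (d + t *: y); rewrite enorm_le.
by rewrite /minres_resid mulmxDr -scalemxAr opprD addrA.
Qed.

Lemma eigenvalue_neq_shift sigma (z : 'cV[C]_n) lam :
  A - sigma%:M \in unitmx -> z != 0 -> A *m z = lam *: z -> lam != sigma.
Proof.
move=> Aunit z0 Az; apply: contra_neq z0 => lam_sigma.
have Bz0 : (A - sigma%:M) *m z = 0.
  by rewrite mulmxBl Az mul_scalar_mx -scalerBl lam_sigma subrr scale0r.
by rewrite -(mulKmx Aunit z) Bz0 mulmx0.
Qed.

Context {Z : 'M[C]_(n, k)} {lam : 'I_k -> C}.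
Hypothesis Zeigen : forall j, A *m col j Z = lam j *: col j Z.

Lemma shift_mul_eigencols sigma :
  (A - sigma%:M) *m Z = Z *m diag_mx (\row_j (lam j - sigma)).
Proof.
rewrite mulmxBl mul_scalar_mx; apply/matrixP => p j; rewrite mul_mx_diag !mxE.
have -> : \sum_q A p q * Z q j = (A *m col j Z) p 0.
  by rewrite mxE; apply: eq_bigr => q _; rewrite mxE.
by rewrite Zeigen !mxE; ring.
Qed.

Lemma colspan_shift_eigencols sigma (u : 'cV[C]_k) :
  (forall j, lam j != sigma) ->
  exists y, (A - sigma%:M) *m Z *m y = Z *m u.
Proof.
move=> lam_sigma; exists (\col_j (u j 0 / (lam j - sigma))).
rewrite shift_mul_eigencols -mulmxA; congr (_ *m _); apply/matrixP => p q.
by rewrite mul_diag_mx !mxE (ord1 q) mulrC divfK // subr_eq0 lam_sigma.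
Qed.

End Minres.

Theorem theorem4p1 (C : numClosedFieldType) (n k ns : nat) (hns : (0 < ns)%N)
  (A : 'M[C]_n) (sigma : 'I_ns -> C)
  (hnonsing : forall i, A - (sigma i)%:M \in unitmx)
  (r0 : 'I_ns -> 'cV[C]_n) (beta : 'I_ns -> C)
  (hbeta1 : beta (Ordinal hns) = 1)
  (hr0 : forall i, r0 i = beta i *: r0 (Ordinal hns))
  (Z : 'M[C]_(n, k)) (hZ : forall j : 'I_k, eigenvector A (col j Z))
  (d : 'I_ns -> 'cV[C]_k)
  (hd : forall i, minres_minimizer A (sigma i) Z (r0 i) (d i)) :
  forall i, exists c : C,
    minres_resid A (sigma i) Z (r0 i) (d i)
    = c *: minres_resid A (sigma (Ordinal hns)) Z (r0 (Ordinal hns)) (d (Ordinal hns)).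
Proof.
move=> i; set i1 := Ordinal hns.
have [lam Zeigen] : exists lam : 'I_k -> C, forall j, A *m col j Z = lam j *: col j Z.
  apply: (@fin_all_exists _ (fun=> C) (fun j l => A *m col j Z = l *: col j Z)) => j.
  by case: (hZ j).
have lam_sigma i' j : lam j != sigma i'.
  by case: (hZ j) => z0 _; exact: eigenvalue_neq_shift (hnonsing i') z0 (Zeigen j).
have resid_orth i' u : dotc (Z *m u) (minres_resid A (sigma i') Z (r0 i') (d i')) = 0.
  have [y <-] := colspan_shift_eigencols Zeigen _ u (lam_sigma i').
  exact: minres_resid_orthogonal.
exists (beta i); apply: (eq_of_orthogonal_colspan (resid_orth i) (resid_orth i1)).
rewrite /minres_resid (hr0 i) !(shift_mul_eigencols Zeigen) -!mulmxA scalerBr.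
by rewrite scalemxAr opprB addrC addrA -/i1 subrK -mulmxBr.
Qed.
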